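(* Let $R$ be a Bézout domain and let $A,B,C\in R^{n\times n}$ satisfy $ABA=ACA$. If $AB$ and $CA$ are group invertible, then $(AB)^2(AB)^{D}$ is similar to $(CA)^2(CA)^{D}$.
   Context: A Bézout domain is an integral domain in which every finitely generated ideal is principal. A matrix $M\in R^{n\times n}$ is Drazin invertible if there exists $X\in R^{n\times n}$ with $MX=XM$, $XMX=X$ and $M^{m+1}X=M^m$ for some nonnegative integer $m$; such $X$ is unique and denoted $M^D$. $M$ is group invertible if this holds with $m=1$ (equivalently $MX=XM$, $XMX=X$, $MXM=M$). Two matrices $M,N\in R^{n\times n}$ are similar if $M=S^{-1}NS$ for some invertible $S\in R^{n\times n}$. *)

From mathcomp Require Import all_boot all_order all_algebra.
Set Implicit Arguments. Unset Strict Implicit. Unset Printing Implicit Defensive.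
Import GRing.Theory.
Local Open Scope ring_scope.

Definition bezout_domain (R : idomainType) : Prop :=
  forall s : seq R, exists d : R, forall x : R,
    (exists c : 'I_(size s) -> R, x = \sum_(i < size s) c i * s`_i)
    <-> (exists r : R, x = r * d).

Definition is_drazin_inverse (R : comNzRingType) (n : nat) (M X : 'M[R]_n) : Prop :=
  [/\ M *m X = X *m M, X *m M *m X = X &
      exists m : nat, M ^+ m.+1 *m X = M ^+ m].

Definition group_invertible (R : comNzRingType) (n : nat) (M : 'M[R]_n) : Prop :=
  exists X : 'M[R]_n,
    [/\ M *m X = X *m M, X *m M *m X = X & M *m X *m M = M].

Definition similar_mx (R : comUnitRingType) (n : nat) (M N : 'M[R]_n) : Prop :=
  exists S : 'M[R]_n, S \in unitmx /\ M = invmx S *m N *m S.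

From mathcomp Require Import all_boot all_order all_algebra ring.

(* (AB)^2 (AB)^D = AB and (CA)^2 (CA)^D = CA because both matrices are group
   invertible, so AB and CA must be shown similar.  K = A intertwines them
   (A (CA) = (AB) A), and F = CAB satisfies KF = (AB)^2, FK = (CA)^2.  Hence the
   idempotents P = AB (AB)^# and Q = CA (CA)^# satisfy PK = KQ, and K maps the
   range of Q onto that of P with left inverse ((CA)^#)^2 F; in particular P and
   Q have the same rank.  Over a Bezout domain every idempotent matrix is
   similar to a diagonal 0/1 matrix (reduce a fixed column to a multiple of the
   first basis vector and induct), so Q = T^-1 P T for some invertible T, and
   then S = KQ + T(1 - Q) is invertible with (AB) S = S (CA). *)

Set Implicit Arguments.
Unset Strict Implicit.
Unset Printing Implicit Defensive.
Import GRing.Theory.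
Local Open Scope ring_scope.

Definition is_group_inverse (R : pzRingType) (a g : R) :=
  [/\ a * g = g * a, g * a * g = g & a * g * a = a].

Section GroupInverse.
Variables (R : pzRingType) (a g : R).
Hypothesis ag : is_group_inverse a g.

Lemma group_inverse_idem : a * g * (a * g) = a * g.
Proof. by case: ag => _ _ aga; rewrite mulrA aga. Qed.

Lemma group_inverse_idemr : a * (a * g) = a.
Proof. by case: ag => ag_ga _ aga; rewrite ag_ga mulrA aga. Qed.

Lemma group_inverse_expr2 : a ^+ 2 * g ^+ 2 = a * g.
Proof.
case: ag => ag_ga _ _; rewrite -group_inverse_idem.
by rewrite !expr2 !mulrA -(mulrA a g a) -ag_ga !mulrA.
Qed.

Lemma group_inverse_expr2l : g ^+ 2 * a ^+ 2 = a * g.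
Proof.
case: ag => ag_ga _ _; rewrite -group_inverse_expr2.
by apply/commrX/commr_sym/commrX.
Qed.

Lemma group_inverse_drazin x m : a ^+ m.+1 * x = a ^+ m -> a ^+ 2 * x = a.
Proof.
case: ag => ag_ga _ aga.
have ga_cancel j : g * a ^+ j.+2 = a ^+ j.+1 by rewrite !exprS !mulrA -ag_ga aga.
case: m => [|m]; first by rewrite expr1 expr0 expr2 -mulrA => ->; rewrite mulr1.
elim: m => [//|m IHm] axm; apply: IHm.
by rewrite -ga_cancel -mulrA axm ga_cancel.
Qed.
End GroupInverse.

Section Intertwiner.
Variables (R : pzRingType) (a b ga gb k : R).
Hypotheses (aga : is_group_inverse a ga) (bgb : is_group_inverse b gb).
Hypothesis kab : k * b = a * k.
Local Notation p := (a * ga).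
Local Notation q := (b * gb).

Lemma intertwiner_idem : p * k = k * q.
Proof.
have [a_ga _ a_p] := aga.
have -> : k * q = p * k * q.
  by rewrite mulrA kab -{1}a_p -!mulrA (mulrA a k) -kab -(mulrA k b).
have -> : p * k = ga * (k * b) by rewrite a_ga -!mulrA kab.
by rewrite -!mulrA (group_inverse_idemr bgb).
Qed.

(* The witness is s = k q + t (1 - q), with left inverse l p + t' (1 - p). *)
Lemma intertwiner_similar l t t' :
  l * k = q -> t' * t = 1 -> p * t = t * q ->
  exists s s', s' * s = 1 /\ a * s = s * b.
Proof.
move=> lkq t't pt; have [b_gb _ b_q] := bgb.
have qq : q * q = q := group_inverse_idem bgb.
have q_1q : q * (1 - q) = 0 by rewrite mulrBr mulr1 qq subrr.
set s := k * q + t * (1 - q).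
have ps : p * s = k * q.
  rewrite mulrDr (mulrA _ k) intertwiner_idem -(mulrA k) qq.
  by rewrite (mulrA _ t) pt -(mulrA t) q_1q mulr0 addr0.
exists s, (l * p + t' * (1 - p)); split.
  rewrite mulrDl -(mulrA l) -(mulrA t') ps mulrBl mul1r ps /s [k * q + _]addrC addrK.
  by rewrite mulrA lkq qq mulrA t't mul1r addrC subrK.
rewrite -{1}(group_inverse_idemr aga) -mulrA ps mulrA -kab -mulrA.
rewrite (group_inverse_idemr bgb) mulrDl -mulrA b_q.
by rewrite -(mulrA t) mulrBl mul1r b_q subrr mulr0 addr0.
Qed.
End Intertwiner.

Section Similarity.
Variables (R : comUnitRingType) (n : nat).
Implicit Types M N P : 'M[R]_n.

Lemma similar_mxP M N :
  similar_mx M N <-> exists2 S, S \in unitmx & S *m M = N *m S.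
Proof.
split=> [[S [uS ->]]|[S uS SMNS]]; exists S => //.
  by rewrite !mulmxA mulmxV ?mul1mx.
by rewrite -mulmxA -SMNS mulKmx.
Qed.

Lemma similar_mx_refl M : similar_mx M M.
Proof. by apply/similar_mxP; exists 1%:M; rewrite ?unitmx1 ?mul1mx ?mulmx1. Qed.

Lemma similar_mx_sym M N : similar_mx M N -> similar_mx N M.
Proof.
case/similar_mxP=> S uS SMNS; apply/similar_mxP; exists (invmx S).
  by rewrite unitmx_inv.
by rewrite -[N](mulmxK uS) -SMNS !mulmxA mulVmx ?mul1mx.
Qed.

Lemma similar_mx_trans M N P :
  similar_mx M N -> similar_mx N P -> similar_mx M P.
Proof.
case/similar_mxP=> S uS SMNS /similar_mxP[T uT TNPT].
apply/similar_mxP; exists (T *m S); first by rewrite unitmx_mul uT.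
by rewrite -mulmxA SMNS !mulmxA TNPT.
Qed.

End Similarity.

Section Lift0.
Variables (R : comUnitRingType) (n : nat).
Implicit Types (b : 'rV[R]_n) (d S : 'M[R]_n).

Lemma lift0_mxM d S : lift0_mx d *m lift0_mx S = lift0_mx (d *m S).
Proof. by rewrite /lift0_mx mulmx_block !(mulmx0, mul0mx, mulmx1, addr0, add0r). Qed.

Lemma lift0_mx_col d (u : 'M[R]_1) (v : 'cV[R]_n) :
  lift0_mx d *m col_mx u v = col_mx u (d *m v).
Proof. by rewrite /lift0_mx mul_block_col !mul0mx mul1mx addr0 add0r. Qed.

Lemma unitmx_lift0 d : (lift0_mx d \in unitmx) = (d \in unitmx).
Proof. by rewrite !unitmxE det_ublock det1 mul1r. Qed.

Lemma similar_mx_lift0 d S : similar_mx d S -> similar_mx (lift0_mx d) (lift0_mx S).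
Proof.
case/similar_mxP=> T uT TdST; apply/similar_mxP; exists (lift0_mx T).
  by rewrite unitmx_lift0.
by rewrite !lift0_mxM TdST.
Qed.

Lemma similar_mx_block_unitriangular b d :
  b *m d = 0 -> similar_mx (block_mx 1%:M b 0 d) (lift0_mx d).
Proof.
move=> bd0; apply/similar_mxP; exists (block_mx 1%:M b 0 1%:M).
  by rewrite unitmxE det_ublock !det1 mul1r unitr1.
by rewrite /lift0_mx !mulmx_block bd0 !(mulmx0, mul0mx, mulmx1, mul1mx, addr0, add0r).
Qed.

Lemma lift0_pid_mx r : lift0_mx (pid_mx r : 'M[R]_n) = pid_mx r.+1.
Proof.
apply/matrixP=> i j; rewrite /lift0_mx !mxE.
case: (splitP i) => i' ->; rewrite !mxE; case: (splitP j) => j' ->.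
all: by rewrite !mxE ?ord1 //= !add1n eqSS ltnS.
Qed.

End Lift0.

Section FracRank.
Variable R : idomainType.

Definition frac_rank m n (M : 'M[R]_(m, n)) := \rank (map_mx (@tofrac R) M).

Lemma frac_rank_mul_le m n p q (X : 'M[R]_(m, n)) Y (Z : 'M[R]_(p, q)) :
  (frac_rank (X *m Y *m Z) <= frac_rank Y)%N.
Proof. by rewrite /frac_rank !map_mxM (leq_trans (mxrankM_maxl _ _)) ?mxrankM_maxr. Qed.

Lemma frac_rank_pid_mx n r : (r <= n)%N -> frac_rank (pid_mx r : 'M[R]_n) = r.
Proof. by move=> rn; rewrite /frac_rank map_pid_mx rank_pid_mx. Qed.

Lemma similar_mx_frac_rank n (M N : 'M[R]_n) :
  similar_mx M N -> frac_rank M = frac_rank N.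
Proof.
move=> MN; case: MN (similar_mx_sym MN) => S [_ MSNS] [T [_ NTMT]].
apply/eqP; rewrite eqn_leq; apply/andP; split.
  by rewrite {1}MSNS frac_rank_mul_le.
by rewrite {1}NTMT frac_rank_mul_le.
Qed.

End FracRank.

Section Corner2.
Variables (R : comUnitRingType) (n : nat).

(* The 2 x 2 matrix [[x, y], [z, w]] acting on the first two coordinates. *)
Definition corner2_mx (x y z w : R) : 'M[R]_(1 + (1 + n)) :=
  block_mx x%:M (row_mx y%:M 0) (col_mx z%:M 0) (block_mx w%:M 0 0 1%:M).

Lemma corner2_mxM x y z w x' y' z' w' :
  corner2_mx x y z w *m corner2_mx x' y' z' w' =
  corner2_mx (x * x' + y * z') (x * y' + y * w') (z * x' + w * z') (z * y' + w * w').
Proof.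
rewrite /corner2_mx !mulmx_block.
rewrite !(mul_row_col, mul_col_row, mul_col_mx, mul_mx_row, mulmx_block).
rewrite !(mulmx0, mul0mx, mulmx1, mul1mx, addr0, add0r) -!scalar_mxM.
by rewrite !(add_col_mx, add_row_mx, add_block_mx, addr0, add0r, row_mx0, col_mx0) -!raddfD.
Qed.

Lemma corner2_mx1 : corner2_mx 1 0 0 1 = 1%:M.
Proof. by rewrite /corner2_mx !raddf0 row_mx0 col_mx0 -!scalar_mx_block. Qed.

Lemma corner2_mx_col x y z w a b :
  corner2_mx x y z w *m col_mx a%:M (col_mx b%:M 0) =
  col_mx (x * a + y * b)%:M (col_mx (z * a + w * b)%:M 0).
Proof.
rewrite /corner2_mx !mul_block_col !(mul_row_col, mul_col_mx, mul_block_col).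
rewrite !(mulmx0, mul0mx, mulmx1, mul1mx, addr0, add0r) -!scalar_mxM.
by rewrite !(add_col_mx, addr0, add0r, col_mx0) -!raddfD.
Qed.

Lemma corner2_mx_unit x y z w :
  x * w - y * z = 1 -> corner2_mx x y z w \in unitmx.
Proof.
move=> det_xyzw; apply: (proj1 (@mulmx1_unit _ _ _ (corner2_mx w (- y) (- z) x) _)).
by rewrite corner2_mxM -corner2_mx1 -det_xyzw; congr corner2_mx; ring.
Qed.

End Corner2.

Lemma idempotent_fix_e0_block (R : comNzRingType) n (E : 'M[R]_(1 + n)) :
  E *m E = E -> E *m col_mx 1%:M 0 = col_mx 1%:M 0 ->
  [/\ E = block_mx 1%:M (ursubmx E) 0 (drsubmx E),
      drsubmx E *m drsubmx E = drsubmx E & ursubmx E *m drsubmx E = 0].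
Proof.
move=> EE; have E_blk := esym (submxK E).
set a := ulsubmx E in E_blk *; set b := ursubmx E in E_blk *.
set c := dlsubmx E in E_blk *; set d := drsubmx E in E_blk *.
rewrite E_blk mul_block_col !mulmx0 !addr0 !mulmx1 => /eq_col_mx[a1 c0].
rewrite a1 c0 in E_blk; rewrite E_blk mulmx_block in EE.
case/eq_block_mx: EE => _ bb _ dd.
rewrite !mul0mx !mul1mx add0r in bb dd.
by split; [rewrite a1 c0 | | apply: (addrI b); rewrite addr0].
Qed.

Section BezoutDomain.
Variables (R : idomainType) (bezR : bezout_domain R).

Lemma bezout_kill2 (a b : R) :
  exists x y z w, x * w - y * z = 1 /\ z * a + w * b = 0.
Proof.
have [d hd] := bezR [:: a; b].
have sum2 (c : 'I_2 -> R) :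
    \sum_(i < 2) c i * [:: a; b]`_i = c ord0 * a + c (lift ord0 ord0) * b.
  by rewrite !big_ord_recl big_ord0 addr0.
have [c] : exists c : 'I_2 -> R, d = \sum_(i < 2) c i * [:: a; b]`_i.
  by apply/hd; exists 1; rewrite mul1r.
rewrite sum2 => d_ab.
have [[ra a_d] [rb b_d]] : (exists r, a = r * d) /\ (exists r, b = r * d).
  split; apply/hd; [exists (fun i => (i == ord0)%:R) | exists (fun i => (i != ord0)%:R)].
    by rewrite sum2 /= mul1r mul0r addr0.
  by rewrite sum2 /= mul1r mul0r add0r.
have [d0|dn0] := eqVneq d 0.
  by exists 1, 0, 0, 1; rewrite a_d b_d d0; split; ring.
exists (c ord0), (c (lift ord0 ord0)), (- rb), ra; split; last by rewrite a_d b_d; ring.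
apply: (mulIf dn0); rewrite mul1r {2}d_ab a_d b_d; ring.
Qed.

Lemma col_reduce n (v : 'cV[R]_(1 + n)) :
  exists2 V, V \in unitmx & exists g, V *m v = col_mx g%:M 0.
Proof.
elim: n v => [|n IHn] v.
  exists 1%:M; first exact: unitmx1.
  by exists (usubmx v 0 0); rewrite mul1mx -mx11_scalar -{1}[v]vsubmxK (flatmx0 (dsubmx v)).
have [W uW [g' Wv]] := IHn (dsubmx v).
have [x [y [z [w [det_xyzw kill]]]]] := bezout_kill2 (usubmx v 0 0) g'.
exists (corner2_mx n x y z w *m lift0_mx W).
  by rewrite unitmx_mul corner2_mx_unit // unitmx_lift0.
exists (x * usubmx v 0 0 + y * g').
rewrite -mulmxA -{1}[v]vsubmxK lift0_mx_col Wv {1}[usubmx v]mx11_scalar.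
by rewrite corner2_mx_col kill raddf0 col_mx0.
Qed.

Lemma idempotent_similar_fix_e0 n (E : 'M[R]_(1 + n)) :
  E *m E = E -> E != 0 ->
  exists2 E', similar_mx E E' & E' *m E' = E' /\ E' *m col_mx 1%:M 0 = col_mx 1%:M 0.
Proof.
move=> EE En0.
have [j cj0] : exists j, col j E != 0.
  apply/existsP; apply: contraNT En0; rewrite negb_exists => /forallP colE0.
  by apply/eqP/matrixP=> i j; have /negbNE/eqP/matrixP/(_ i 0) := colE0 j; rewrite !mxE.
set c := col j E in cj0.
have Ec : E *m c = c by rewrite /c !colE mulmxA EE.
have [V uV [g Vc]] := col_reduce c.
have g0 : g != 0.
  by apply: contraNneq cj0 => g0; rewrite -[c](mulKmx uV) Vc g0 raddf0 col_mx0 mulmx0.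
exists (V *m E *m invmx V); first by apply/similar_mxP; exists V; rewrite ?mulmxKV.
split; first by rewrite !mulmxA mulmxKV // -(mulmxA V) EE.
apply: (scalemx_inj g0); rewrite scalemxAr scale_col_mx scalemx1 scaler0 -Vc.
by rewrite mulmxA mulmxKV // -mulmxA Ec.
Qed.

Lemma idempotent_similar_pid_mx n (E : 'M[R]_n) :
  E *m E = E -> exists2 r, (r <= n)%N & similar_mx E (pid_mx r).
Proof.
elim: n E => [|n IHn] E EE.
  by exists 0%N; rewrite // [E]flatmx0 pid_mx_0; apply: similar_mx_refl.
have [->|En0] := eqVneq E 0.
  by exists 0%N; rewrite // pid_mx_0; apply: similar_mx_refl.
have [E' EE' [E'E' E'e0]] := idempotent_similar_fix_e0 EE En0.
have [E'_blk dd bd] := idempotent_fix_e0_block E'E' E'e0.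
have [r rn dr] := IHn _ dd.
exists r.+1 => //; apply: (similar_mx_trans EE'); rewrite E'_blk.
apply: (similar_mx_trans (similar_mx_block_unitriangular bd)).
by rewrite -lift0_pid_mx; apply: similar_mx_lift0.
Qed.

Lemma idempotents_similar n (P Q : 'M[R]_n) :
  P *m P = P -> Q *m Q = Q -> frac_rank P = frac_rank Q -> similar_mx P Q.
Proof.
move=> PP QQ; have [r rn Pr] := idempotent_similar_pid_mx PP.
have [s sn Qs] := idempotent_similar_pid_mx QQ.
rewrite (similar_mx_frac_rank Pr) (similar_mx_frac_rank Qs) !frac_rank_pid_mx // => rs.
by rewrite -rs in Qs; apply: similar_mx_trans Pr (similar_mx_sym Qs).
Qed.

Lemma intertwined_group_inverses_similar n (M N K F Gm Gn : 'M[R]_n) :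
  is_group_inverse M Gm -> is_group_inverse N Gn ->
  K * N = M * K -> K * F = M ^+ 2 -> F * K = N ^+ 2 -> similar_mx M N.
Proof.
move=> MGm NGn KNMK KFM2 FKN2.
have PKKQ := intertwiner_idem MGm NGn KNMK.
have LKQ : Gn ^+ 2 * F * K = N * Gn by rewrite -mulrA FKN2 (group_inverse_expr2l NGn).
have P_KQ : M * Gm = K * (N * Gn) * (F * Gm ^+ 2).
  by rewrite -PKKQ -(mulrA _ K) (mulrA K) KFM2 (group_inverse_expr2 MGm) (group_inverse_idem MGm).
have Q_PK : N * Gn = Gn ^+ 2 * F * (M * Gm) * K.
  by rewrite -(mulrA _ (M * Gm)) PKKQ (mulrA _ K) LKQ (group_inverse_idem NGn).
have QP : similar_mx (N * Gn) (M * Gm).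
  apply: idempotents_similar (group_inverse_idem NGn) (group_inverse_idem MGm) _.
  apply/eqP; rewrite eqn_leq; apply/andP; split.
    by rewrite {1}Q_PK frac_rank_mul_le.
  by rewrite {1}P_KQ frac_rank_mul_le.
have /similar_mxP[T uT TQPT] := QP.
have [S [S' [S'S MSSN]]] := intertwiner_similar MGm NGn KNMK LKQ (mulVmx uT) (esym TQPT).
apply/similar_mx_sym/similar_mxP; exists S; last exact: esym MSSN.
by case: (mulmx1_unit S'S).
Qed.

End BezoutDomain.

Theorem corollary3p6 (R : idomainType) (n : nat) (A B C : 'M[R]_n) :
  bezout_domain R ->
  A *m B *m A = A *m C *m A ->
  group_invertible (A *m B) -> group_invertible (C *m A) ->
  forall X Y : 'M[R]_n,
    is_drazin_inverse (A *m B) X -> is_drazin_inverse (C *m A) Y ->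
    similar_mx ((A *m B) ^+ 2 *m X) ((C *m A) ^+ 2 *m Y).
Proof.
move=> bezR ABA [Gm ABGm] [Gn CAGn] X Y [_ _ [k ABX]] [_ _ [l CAY]].
rewrite !mulmxE in ABA ABX CAY *.
rewrite (group_inverse_drazin ABGm ABX) (group_inverse_drazin CAGn CAY).
apply: (intertwined_group_inverses_similar bezR ABGm CAGn (K := A) (F := C * A * B)).
- by rewrite mulrA ABA.
- by rewrite expr2 !mulrA ABA.
- by rewrite expr2 -!mulrA (mulrA A B A) ABA !mulrA.
Qed.
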